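(* Fix $a,g>0$ and let $\rho_0\in C^\infty(\mathbb{T})$ be even and nonnegative with $\rho_0(0)=0$ and $\rho_0'\ge 0$ on $[0,\pi)$. Suppose $\rho\in C^\infty(\mathbb{T}\times[0,T))$ solves \[ \partial_t \rho + g\,(H_a\rho)\,\partial_x \rho = 0,\qquad \rho(\cdot,0)=\rho_0 . \] Then for all $t\in[0,T)$, $\rho(\cdot,t)$ is even and nonnegative, $\rho(0,t)=0$, and $\partial_x\rho(\cdot,t)\ge 0$ on $[0,\pi)$.
   Context: $\mathbb{T}=[-\pi,\pi)$ is the circle; functions on $\mathbb{T}$ are identified with $2\pi$-periodic functions on $\mathbb{R}$, and $C^\infty(\mathbb{T})$ denotes smooth $2\pi$-periodic functions with all derivatives bounded. For $a>0$, $H_a f(x) := \mathrm{P.V.}\int_{\mathbb{R}} f(x-y)K_a(y)\,dy$ with $K_a(y) := \frac{a^2}{\pi y(y^2+a^2)}$, applied to the periodic extension of $f$. *)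

From Stdlib Require Import Reals.
From Coquelicot Require Import Coquelicot.
Open Scope R_scope.

Definition Ka (a y : R) : R := a ^ 2 / (PI * y * (y ^ 2 + a ^ 2)).

(* h = H_a f x = P.V. int_R f(x-y) K_a(y) dy, i.e. the limit as eps -> 0+ of
   int_{-oo}^{-eps} f(x-y)K_a(y) dy + int_{eps}^{+oo} f(x-y)K_a(y) dy
   (both improper integrals converging). *)
Definition is_Ha (a : R) (f : R -> R) (x h : R) : Prop :=
  exists I1 I2 : R -> R,
    (forall eps, 0 < eps ->
       is_RInt_gen (fun y => f (x - y) * Ka a y)
         (Rbar_locally m_infty) (at_point (- eps)) (I1 eps) /\
       is_RInt_gen (fun y => f (x - y) * Ka a y)
         (at_point eps) (Rbar_locally p_infty) (I2 eps)) /\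
    filterlim (fun eps => I1 eps + I2 eps) (at_right 0) (locally h).

Definition smooth1 (f : R -> R) : Prop :=
  forall n x, ex_derive (Derive_n f n) x.

Definition periodic (f : R -> R) : Prop := forall x, f (x + 2 * PI) = f x.

Definition dom2 (T : Rbar) (p : R * R) : Prop :=
  0 <= snd p /\ Rbar_lt (snd p) T.

(* C^n(R x [0,T)) : all partial derivatives of order <= n exist (time
   derivatives in the interior 0 < t < T) and extend continuously to
   R x [0,T). *)
Definition cont2 (T : Rbar) (f : R -> R -> R) : Prop :=
  forall x t, 0 <= t -> Rbar_lt t T ->
           filterlim (fun p : R * R => f (fst p) (snd p))
             (within (dom2 T) (locally (x, t))) (locally (f x t)).

Fixpoint Ck2 (n : nat) (T : Rbar) (f : R -> R -> R) : Prop :=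
  match n with
  | O => cont2 T f
  | S m => cont2 T f /\
      exists fx ft : R -> R -> R,
        (forall x t, 0 <= t -> Rbar_lt t T -> is_derive (fun y => f y t) x (fx x t)) /\
        (forall x t, 0 < t -> Rbar_lt t T -> is_derive (fun s => f x s) t (ft x t)) /\
        Ck2 m T fx /\ Ck2 m T ft
  end.

Definition smooth2 (T : Rbar) (f : R -> R -> R) : Prop := forall n, Ck2 n T f.

(* Let E(x, t) = rho(x, t) - rho(-x, t).  Where |E(., t)| is maximal, d_x E = 0,
   i.e. d_x rho(-x) = -d_x rho(x), so d_t E = -g d_x rho(x) (H_a rho(x) + H_a rho(-x)).
   As K_a is odd, H_a rho(x) + H_a rho(-x) only involves E; splitting the integral at
   del bounds it by C (del |d_x E| + |E| log(1 + a^2/del^2)).  Comparison with a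
   barrier over time steps of length pi / (4 g |d_x rho|_oo) gives
   |E| <= C del (1 + a^2/del^2)^(1/4) = O(del^(1/2)), hence E = 0.
   Evenness makes d_x rho vanish at 0 and pi, so rho(0, t) is frozen in time; a
   first-touching argument for rho(y) - rho(y u) + eps (1 + t) on [0,1] x [0,pi]
   shows that rho(., t) stays nondecreasing along rays [0, y], which yields
   nonnegativity and d_x rho >= 0 on [0, pi). *)

From Stdlib Require Import Reals Lra Lia ZArith Classical ClassicalEpsilon.
From Coquelicot Require Import Coquelicot.
Open Scope R_scope.

(** * Calculus and periodicity *)

Lemma is_derive_ext_R (f h : R -> R) x l :
  (forall y, f y = h y) -> is_derive f x l -> is_derive h x l.
Proof. apply is_derive_ext. Qed.

Lemma is_derive_Rminus (f h : R -> R) x l1 l2 :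
  is_derive f x l1 -> is_derive h x l2 -> is_derive (fun y => f y - h y) x (l1 - l2).
Proof. intros H1 H2. exact (is_derive_minus f h x l1 l2 H1 H2). Qed.

Lemma is_derive_comp_affine (f : R -> R) s c x l :
  is_derive f (s * x + c) l -> is_derive (fun y => f (s * y + c)) x (s * l).
Proof.
  intros H. replace (s * l) with (scal s l) by reflexivity.
  apply (is_derive_comp f (fun y => s * y + c)); [exact H|]. auto_derive; auto. ring.
Qed.

Lemma is_derive_comp_opp (f : R -> R) x l :
  is_derive f (- x) l -> is_derive (fun y => f (- y)) x (- l).
Proof.
  intros H. replace (- l) with (-1 * l) by ring.
  eapply is_derive_ext; [|apply (is_derive_comp_affine f (-1) 0)].
  - intros y. simpl. f_equal. ring.
  - now replace (-1 * x + 0) with (- x) by ring.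
Qed.

Lemma is_derive_comp_scal (f : R -> R) s x l :
  is_derive f (s * x) l -> is_derive (fun y => f (s * y)) x (s * l).
Proof.
  intros H. eapply is_derive_ext; [|apply (is_derive_comp_affine f s 0)].
  - intros y. simpl. f_equal. ring.
  - now rewrite Rplus_0_r.
Qed.

Lemma is_derive_sqr (f : R -> R) x l :
  is_derive f x l -> is_derive (fun y => f y * f y) x (2 * f x * l).
Proof.
  intros H. replace (2 * f x * l) with (plus (mult l (f x)) (mult (f x) l))
    by (unfold plus, mult; simpl; ring).
  apply (is_derive_mult f f x l l H H). intros; apply Rmult_comm.
Qed.

Lemma is_derive_ge0_of_right (f : R -> R) x l d :
  is_derive f x l -> 0 < d -> (forall h, 0 < h < d -> f x <= f (x + h)) -> 0 <= l.
Proof.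
  intros Hd Hd0 Hm. apply is_derive_Reals in Hd.
  apply Rnot_lt_le. intros Hl.
  destruct (Hd (- l / 2) ltac:(lra)) as [del Hdel].
  pose proof (cond_pos del). pose proof (Rmin_l del d). pose proof (Rmin_r del d).
  set (h := Rmin del d / 2).
  assert (0 < Rmin del d) by now apply Rmin_glb_lt.
  assert (Hh : 0 < h < d) by (unfold h; lra).
  specialize (Hdel h ltac:(lra) ltac:(rewrite Rabs_pos_eq by lra; unfold h; lra)).
  specialize (Hm h Hh). apply Rabs_def2 in Hdel.
  assert ((f (x + h) - f x) / h * h = f (x + h) - f x) by (field; lra).
  nra.
Qed.

Lemma is_derive_le0_of_left (f : R -> R) x l d :
  is_derive f x l -> 0 < d -> (forall h, 0 < h < d -> f x <= f (x - h)) -> l <= 0.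
Proof.
  intros Hd Hd0 Hm.
  assert (Hopp : is_derive (fun y => f (- y)) (- x) (- l))
    by (apply is_derive_comp_opp; now rewrite Ropp_involutive).
  enough (0 <= - l) by lra.
  apply (is_derive_ge0_of_right _ _ _ d Hopp Hd0). intros h Hh.
  rewrite Ropp_involutive. replace (- (- x + h)) with (x - h) by ring. auto.
Qed.

Lemma is_derive_local_min (f : R -> R) x l d :
  is_derive f x l -> 0 < d -> (forall h, Rabs h < d -> f x <= f (x + h)) -> l = 0.
Proof.
  intros Hd Hd0 Hm. apply Rle_antisym.
  - apply (is_derive_le0_of_left f x l d Hd Hd0). intros h Hh.
    replace (x - h) with (x + - h) by ring. apply Hm. rewrite Rabs_Ropp, Rabs_pos_eq; lra.
  - apply (is_derive_ge0_of_right f x l d Hd Hd0). intros h Hh.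
    apply Hm. rewrite Rabs_pos_eq; lra.
Qed.

Lemma is_derive_reflect_center (f : R -> R) c l :
  (forall y, f (c - y) = f y) -> is_derive f (c / 2) l -> l = 0.
Proof.
  intros Hs Hd.
  assert (Hd' : is_derive f (c / 2) (- l)).
  { apply (is_derive_ext (fun y => f (-1 * y + c))); [intros y; rewrite <- Hs; f_equal; ring|].
    replace (- l) with (-1 * l) by ring.
    apply (is_derive_comp_affine f (-1) c).
    now replace (-1 * (c / 2) + c) with (c / 2) by field. }
  pose proof (is_derive_unique _ _ _ Hd) as U1.
  pose proof (is_derive_unique _ _ _ Hd') as U2. lra.
Qed.

Lemma lipschitz_of_derive_bounded (f df : R -> R) M :
  (forall z, is_derive f z (df z)) -> (forall z, Rabs (df z) <= M) ->
  forall z w, Rabs (f z - f w) <= M * Rabs (z - w).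
Proof.
  intros Hd Hb z w.
  destruct (MVT_gen f w z df) as [c [_ Heq]].
  - intros; apply Hd.
  - intros y _. apply continuity_pt_filterlim.
    apply (ex_derive_continuous (V := R_NormedModule)). exists (df y). apply Hd.
  - rewrite Heq, Rabs_mult. apply Rmult_le_compat_r; [apply Rabs_pos | apply Hb].
Qed.

Lemma const_of_is_derive_zero_right (f : R -> R) s :
  0 < s -> (forall r, 0 < r <= s -> is_derive f r 0) ->
  (forall e, 0 < e -> exists d, 0 < d /\ forall r, 0 < r < d -> Rabs (f r - f 0) < e) ->
  f s = f 0.
Proof.
  intros Hs Hd Hcont.
  assert (Hconst : forall r, 0 < r <= s -> f s = f r).
  { intros r Hr. destruct (MVT_gen f r s (fun _ => 0)) as [c [_ Heq]].
    - intros q Hq. rewrite Rmin_left, Rmax_right in Hq by lra. apply Hd. lra.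
    - intros q Hq. rewrite Rmin_left, Rmax_right in Hq by lra.
      apply continuity_pt_filterlim, (ex_derive_continuous (V := R_NormedModule)).
      exists 0. apply Hd. lra.
    - lra. }
  apply Rminus_diag_uniq, Rabs_eq_0, Rle_antisym; [|apply Rabs_pos].
  apply Rle_plus_epsilon. intros e He.
  destruct (Hcont e He) as [d [Hd0 Hr]].
  set (r := Rmin s (d / 2)).
  assert (0 < r <= s /\ r < d).
  { unfold r. pose proof (Rmin_l s (d / 2)). pose proof (Rmin_r s (d / 2)).
    assert (0 < Rmin s (d / 2)) by (apply Rmin_glb_lt; lra). lra. }
  rewrite (Hconst r) by lra. specialize (Hr r ltac:(lra)). lra.
Qed.

Lemma exp_le (x y : R) : x <= y -> exp x <= exp y.
Proof.
  intros [Hlt | ->]; [left; now apply exp_increasing | apply Rle_refl].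
Qed.

Lemma periodic_shift_nat (f : R -> R) :
  periodic f -> forall n x, f (x + 2 * PI * INR n) = f x.
Proof.
  intros Hp n. induction n as [|n IH]; intros x.
  - simpl. f_equal. ring.
  - rewrite S_INR. replace (x + 2 * PI * (INR n + 1)) with ((x + 2 * PI * INR n) + 2 * PI) by ring.
    rewrite Hp. apply IH.
Qed.

Lemma periodic_shift_Z (f : R -> R) :
  periodic f -> forall z x, f (x + 2 * PI * IZR z) = f x.
Proof.
  intros Hp z x. destruct (Z_le_gt_dec 0 z) as [Hz | Hz].
  - rewrite <- (Z2Nat.id z Hz), <- INR_IZR_INZ. now apply periodic_shift_nat.
  - pose proof (periodic_shift_nat f Hp (Z.to_nat (- z)) (x + 2 * PI * IZR z)) as H.
    rewrite INR_IZR_INZ, Z2Nat.id, opp_IZR in H by lia.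
    now replace (x + 2 * PI * IZR z + 2 * PI * - IZR z) with x in H by ring.
Qed.

Lemma periodic_reduce (f : R -> R) :
  periodic f -> forall x, exists x', - PI <= x' <= PI /\ f x = f x'.
Proof.
  intros Hp x. pose proof PI_RGT_0.
  destruct (archimed ((x + PI) / (2 * PI))) as [H1 H2].
  set (z := (up ((x + PI) / (2 * PI)) - 1)%Z).
  exists (x + 2 * PI * IZR (- z)). split.
  - rewrite opp_IZR. unfold z. rewrite minus_IZR. simpl.
    set (u := IZR (up ((x + PI) / (2 * PI)))) in *.
    assert ((x + PI) / (2 * PI) * (2 * PI) = x + PI) by (field; lra).
    split; nra.
  - now rewrite periodic_shift_Z.
Qed.

(** * Compactness and continuity on boxes *)

Lemma inv_INR_S_pos (k : nat) : 0 < / INR (S k).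
Proof. apply Rinv_0_lt_compat, lt_0_INR; lia. Qed.

Lemma inv_INR_S_le (m k : nat) : (k <= m)%nat -> / INR (S m) <= / INR (S k).
Proof. intros H. apply Rinv_le_contravar; [apply lt_0_INR; lia | apply le_INR; lia]. Qed.

Lemma exists_inv_INR_S_lt (e : R) : 0 < e -> exists k : nat, / INR (S k) < e.
Proof.
  intros He. destruct (archimed_cor1 e He) as [N [HN HN0]].
  exists (pred N). now rewrite Nat.succ_pred_pos.
Qed.

Lemma bounded_seq_extract (u : nat -> R) (a b : R) :
  (forall n, a <= u n <= b) ->
  exists (phi : nat -> nat) (l : R), a <= l <= b /\
    (forall k, (k <= phi k)%nat) /\
    (forall k, Rabs (u (phi k) - l) < / INR (S k)).
Proof.
  intros Hu.
  destruct (Bolzano_Weierstrass u (fun c => a <= c <= b) (compact_P3 a b) Hu)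
    as [l Hl].
  assert (Hnear : forall Nk : nat * nat, exists p,
             (fst Nk <= p)%nat /\ Rabs (u p - l) < / INR (S (snd Nk))).
  { intros [N k].
    destruct (Hl (disc l (mkposreal _ (inv_INR_S_pos k))) N) as [p Hp].
    - now exists (mkposreal _ (inv_INR_S_pos k)).
    - now exists p. }
  destruct (choice _ Hnear) as [c Hc].
  pose (phi := fix phi k :=
         match k with O => c (O, O) | S k' => c (S (phi k'), S k') end).
  assert (Hphi : forall k, (k <= phi k)%nat /\ Rabs (u (phi k) - l) < / INR (S k)).
  { induction k as [|k IH]; simpl.
    - split; [lia | apply (Hc (O, O))].
    - destruct (Hc (S (phi k), S k)) as [H1 H2]; simpl in *. split; [lia | exact H2]. }
  exists phi, l. split; [|split; intros k; apply Hphi].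
  split; apply Rnot_lt_le; intros Hout.
  - destruct (exists_inv_INR_S_lt (a - l)) as [k Hk]; [lra|].
    destruct (Hphi k) as [_ H]. specialize (Hu (phi k)). apply Rabs_def2 in H. lra.
  - destruct (exists_inv_INR_S_lt (l - b)) as [k Hk]; [lra|].
    destruct (Hphi k) as [_ H]. specialize (Hu (phi k)). apply Rabs_def2 in H. lra.
Qed.

Lemma exists_inf (S : R -> Prop) (c : R) :
  (exists t, S t) -> (forall t, S t -> c <= t) ->
  exists m, (forall t, S t -> m <= t) /\ (forall e, 0 < e -> exists t, S t /\ t < m + e).
Proof.
  intros Hne Hlow.
  destruct (completeness (fun r => S (- r))) as [m [Hub Hlub]].
  - exists (- c). intros r Hr. apply Hlow in Hr. lra.
  - destruct Hne as [t Ht]. exists (- t). cbv beta. now rewrite Ropp_involutive.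
  - exists (- m). split.
    + intros t Ht. enough (- t <= m) by lra. apply Hub. cbv beta. now rewrite Ropp_involutive.
    + intros e He. apply NNPP. intros Hnone.
      enough (m <= m - e) by lra.
      apply Hlub. intros r Hr. apply Rnot_lt_le. intros Hlt. apply Hnone.
      exists (- r). split; [exact Hr | lra].
Qed.

Lemma ball_R (x y e : R) : ball x e y <-> Rabs (y - x) < e.
Proof. reflexivity. Qed.

Section Box.

Variables a1 b1 a2 b2 t0 t1 : R.

Definition in_box (x y t : R) : Prop :=
  a1 <= x <= b1 /\ a2 <= y <= b2 /\ t0 <= t <= t1.

Definition box_continuous (F : R -> R -> R -> R) : Prop :=
  forall x y t, in_box x y t ->
  forall eps, 0 < eps -> exists del, 0 < del /\
    forall x' y' t', in_box x' y' t' ->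
      Rabs (x' - x) < del -> Rabs (y' - y) < del -> Rabs (t' - t) < del ->
      Rabs (F x' y' t' - F x y t) < eps.

Lemma box_seq_extract (p q t : nat -> R) :
  (forall n, in_box (p n) (q n) (t n)) ->
  exists X Y Z, in_box X Y Z /\
    forall k : nat, exists n, (k <= n)%nat /\ Rabs (p n - X) < / INR (S k) /\
      Rabs (q n - Y) < / INR (S k) /\ Rabs (t n - Z) < / INR (S k).
Proof.
  intros H.
  destruct (bounded_seq_extract p a1 b1) as [f1 [X [HX [Hf1 Hp]]]];
    [intros n; apply H|].
  destruct (bounded_seq_extract (fun k => q (f1 k)) a2 b2) as [f2 [Y [HY [Hf2 Hq]]]];
    [intros n; apply H|].
  destruct (bounded_seq_extract (fun k => t (f1 (f2 k))) t0 t1) as [f3 [Z [HZ [Hf3 Ht]]]];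
    [intros n; apply H|].
  exists X, Y, Z. split; [repeat split; tauto|].
  intros k. exists (f1 (f2 (f3 k))).
  pose proof (Hf3 k). pose proof (Hf2 (f3 k)). pose proof (Hf1 (f2 (f3 k))).
  split; [lia|]. split; [|split; [|apply Ht]].
  - eapply Rlt_le_trans; [apply Hp | apply inv_INR_S_le; lia].
  - eapply Rlt_le_trans; [apply (Hq (f3 k)) | apply inv_INR_S_le; lia].
Qed.

Lemma box_continuous_bounded F :
  box_continuous F -> exists P, forall x y t, in_box x y t -> Rabs (F x y t) <= P.
Proof.
  intros Hc. apply NNPP. intros Hunb.
  assert (Hs : forall n : nat, exists z : R * R * R,
             in_box (fst (fst z)) (snd (fst z)) (snd z) /\
             INR n < Rabs (F (fst (fst z)) (snd (fst z)) (snd z))).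
  { intros n. apply NNPP. intros Hn. apply Hunb. exists (INR n).
    intros x y t Hb. apply Rnot_lt_le. intros Hl. apply Hn. now exists (x, y, t). }
  destruct (choice _ Hs) as [z Hz].
  destruct (box_seq_extract (fun n => fst (fst (z n))) (fun n => snd (fst (z n)))
              (fun n => snd (z n))) as [X [Y [Z [HXYZ Hcl]]]]; [intros n; apply Hz|].
  destruct (Hc X Y Z HXYZ 1 Rlt_0_1) as [del [Hdel Hd]].
  destruct (exists_inv_INR_S_lt del Hdel) as [k1 Hk1].
  destruct (INR_unbounded (Rabs (F X Y Z) + 1)) as [k2 Hk2].
  destruct (Hcl (Nat.max k1 k2)) as [n [Hn [H1 [H2 H3]]]].
  pose proof (inv_INR_S_le (Nat.max k1 k2) k1 ltac:(lia)).
  assert (INR k2 <= INR n) by (apply le_INR; lia).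
  destruct (Hz n) as [Hb Hbig].
  specialize (Hd _ _ _ Hb ltac:(lra) ltac:(lra) ltac:(lra)).
  pose proof (Rabs_triang_inv (F (fst (fst (z n))) (snd (fst (z n))) (snd (z n))) (F X Y Z)).
  lra.
Qed.

Lemma box_earliest_nonpositive F :
  box_continuous F -> (exists x y t, in_box x y t /\ F x y t <= 0) ->
  exists X Y ts, in_box X Y ts /\ F X Y ts <= 0 /\
    forall x y t, in_box x y t -> F x y t <= 0 -> ts <= t.
Proof.
  intros Hc Hex.
  destruct (exists_inf (fun t => exists x y, in_box x y t /\ F x y t <= 0) t0)
    as [m [Hinf Happ]].
  { destruct Hex as (x & y & t & H). now exists t, x, y. }
  { intros t (x & y & (_ & _ & Ht) & _). lra. }
  assert (Happrox : forall n : nat, exists z : R * R * R,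
             (in_box (fst (fst z)) (snd (fst z)) (snd z) /\
              F (fst (fst z)) (snd (fst z)) (snd z) <= 0) /\ snd z < m + / INR (S n)).
  { intros n. destruct (Happ _ (inv_INR_S_pos n)) as (t & (x & y & H) & Ht).
    now exists (x, y, t). }
  destruct (choice _ Happrox) as [z Hz].
  destruct (box_seq_extract (fun n => fst (fst (z n))) (fun n => snd (fst (z n)))
              (fun n => snd (z n))) as [X [Y [ts [Hts Hcl]]]]; [intros n; apply Hz|].
  assert (HFX : F X Y ts <= 0).
  { apply Rnot_lt_le. intros Hpos.
    destruct (Hc X Y ts Hts _ Hpos) as [del [Hdel Hd]].
    destruct (exists_inv_INR_S_lt del Hdel) as [k Hk].
    destruct (Hcl k) as [n [_ [H1 [H2 H3]]]].
    destruct (Hz n) as [[Hbn HFn] _].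
    specialize (Hd _ _ _ Hbn ltac:(lra) ltac:(lra) ltac:(lra)).
    apply Rabs_def2 in Hd. lra. }
  assert (Hle : ts <= m).
  { apply Rnot_lt_le. intros Hlt.
    destruct (exists_inv_INR_S_lt ((ts - m) / 2)) as [k Hk]; [lra|].
    destruct (Hcl k) as [n [Hn [_ [_ H3]]]].
    pose proof (inv_INR_S_le n k Hn). destruct (Hz n) as [_ Htn].
    apply Rabs_def2 in H3. lra. }
  exists X, Y, ts. split; [exact Hts | split; [exact HFX|]].
  intros x y t Hb HF. enough (m <= t) by lra. apply Hinf. now exists x, y.
Qed.

Lemma box_first_touch F :
  box_continuous F -> (forall x y, in_box x y t0 -> 0 < F x y t0) ->
  (forall x y t, in_box x y t -> 0 < F x y t) \/
  exists xs ys ts, in_box xs ys ts /\ t0 < ts /\ F xs ys ts = 0 /\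
    (forall x y, in_box x y ts -> 0 <= F x y ts) /\
    (forall t, t0 <= t < ts -> 0 < F xs ys t).
Proof.
  intros Hc H0.
  destruct (classic (exists x y t, in_box x y t /\ F x y t <= 0)) as [Hex | Hnone].
  2: { left. intros x y t Hb. apply Rnot_le_lt. intros Hl. apply Hnone. now exists x, y, t. }
  right.
  destruct (box_earliest_nonpositive F Hc Hex) as (X & Y & ts & Hts & HFX & Hmin).
  assert (Hbefore : forall x y t, in_box x y t -> t < ts -> 0 < F x y t).
  { intros x y t Hb Ht. apply Rnot_le_lt. intros Hl. specialize (Hmin x y t Hb Hl). lra. }
  assert (Hlate : t0 < ts).
  { destruct Hts as (HX & HY & Ht). destruct (Req_dec ts t0) as [E | E]; [|lra].
    subst ts. specialize (H0 X Y (conj HX (conj HY Ht))). lra. }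
  assert (Hat : forall x y, in_box x y ts -> 0 <= F x y ts).
  { intros x y Hb. apply Rnot_lt_le. intros Hneg.
    destruct (Hc x y ts Hb (- F x y ts) ltac:(lra)) as [del [Hdel Hd]].
    set (t' := Rmax t0 (ts - del / 2)).
    assert (Ht' : t0 <= t' < ts /\ ts - del < t').
    { unfold t'. pose proof (Rmax_l t0 (ts - del / 2)). pose proof (Rmax_r t0 (ts - del / 2)).
      split; [split; [lra | apply Rmax_lub_lt; lra] | lra]. }
    destruct Hb as (HX & HY & Ht).
    assert (Hb' : in_box x y t') by (repeat split; lra).
    specialize (Hd x y t' Hb'). rewrite !Rminus_diag, !Rabs_R0 in Hd.
    specialize (Hd Hdel Hdel ltac:(apply Rabs_def1; lra)).
    specialize (Hbefore x y t' Hb' ltac:(lra)). apply Rabs_def2 in Hd. lra. }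
  exists X, Y, ts. split; [exact Hts | split; [exact Hlate | split; [|split; [exact Hat|]]]].
  - specialize (Hat X Y Hts). lra.
  - intros t Ht. destruct Hts as (HX & HY & Hts). apply Hbefore; [repeat split|]; lra.
Qed.

Lemma box_continuous_const c : box_continuous (fun _ _ _ => c).
Proof.
  intros x y t _ eps Heps. exists 1. split; [lra|].
  intros. rewrite Rminus_diag, Rabs_R0. exact Heps.
Qed.

Lemma box_continuous_x : box_continuous (fun x _ _ => x).
Proof. intros x y t _ eps Heps. exists eps. auto. Qed.

Lemma box_continuous_y : box_continuous (fun _ y _ => y).
Proof. intros x y t _ eps Heps. exists eps. auto. Qed.

Lemma box_continuous_t : box_continuous (fun _ _ t => t).
Proof. intros x y t _ eps Heps. exists eps. auto. Qed.

Lemma box_continuous_comp (phi : R -> R) F :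
  (forall z, continuous phi z) -> box_continuous F ->
  box_continuous (fun x y t => phi (F x y t)).
Proof.
  intros Hphi HF x y t Hb eps Heps.
  destruct (proj1 (filterlim_locally _ _) (Hphi (F x y t)) (mkposreal eps Heps)) as [d Hd].
  destruct (HF x y t Hb d (cond_pos d)) as [del [Hdel H]].
  exists del. split; [exact Hdel|]. intros x' y' t' Hb' Hx Hy Ht.
  apply (Hd (F x' y' t')), H; auto.
Qed.

Lemma box_continuous_comp2 (phi : R -> R -> R) F G :
  (forall u v, continuity_2d_pt phi u v) ->
  box_continuous F -> box_continuous G ->
  box_continuous (fun x y t => phi (F x y t) (G x y t)).
Proof.
  intros Hphi HF HG x y t Hb eps Heps.
  destruct (Hphi (F x y t) (G x y t) (mkposreal eps Heps)) as [d Hd].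
  destruct (HF x y t Hb d (cond_pos d)) as [d1 [Hd1 H1]].
  destruct (HG x y t Hb d (cond_pos d)) as [d2 [Hd2 H2]].
  exists (Rmin d1 d2). split; [now apply Rmin_glb_lt|].
  intros x' y' t' Hb' Hx Hy Ht.
  pose proof (Rmin_l d1 d2). pose proof (Rmin_r d1 d2).
  apply Hd; [apply H1 | apply H2]; auto; lra.
Qed.

Lemma box_continuous_plus F G :
  box_continuous F -> box_continuous G ->
  box_continuous (fun x y t => F x y t + G x y t).
Proof.
  apply (box_continuous_comp2 (fun u v => u + v)). intros u v.
  apply continuity_2d_pt_plus; [apply continuity_2d_pt_id1 | apply continuity_2d_pt_id2].
Qed.

Lemma box_continuous_minus F G :
  box_continuous F -> box_continuous G ->
  box_continuous (fun x y t => F x y t - G x y t).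
Proof.
  apply (box_continuous_comp2 (fun u v => u - v)). intros u v.
  apply continuity_2d_pt_minus; [apply continuity_2d_pt_id1 | apply continuity_2d_pt_id2].
Qed.

Lemma box_continuous_mult F G :
  box_continuous F -> box_continuous G ->
  box_continuous (fun x y t => F x y t * G x y t).
Proof.
  apply (box_continuous_comp2 (fun u v => u * v)). intros u v.
  apply continuity_2d_pt_mult; [apply continuity_2d_pt_id1 | apply continuity_2d_pt_id2].
Qed.

Lemma box_continuous_cont2 (T : Rbar) (f : R -> R -> R) X :
  cont2 T f -> 0 <= t0 -> Rbar_lt t1 T -> box_continuous X ->
  box_continuous (fun x y t => f (X x y t) t).
Proof.
  intros Hf Ht0 Ht1 HX x y t Hb eps Heps.
  assert (Htime : forall s, t0 <= s <= t1 -> 0 <= s /\ Rbar_lt s T).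
  { intros s Hs. split; [lra|]. eapply Rbar_le_lt_trans; [|exact Ht1]. simpl; lra. }
  destruct (Htime t (proj2 (proj2 Hb))) as [Ht0' HtT].
  pose proof (Hf (X x y t) t Ht0' HtT) as Hlim.
  destruct (proj1 (filterlim_locally _ _) Hlim (mkposreal eps Heps)) as [d1 Hd1].
  destruct (HX x y t Hb d1 (cond_pos d1)) as [d2 [Hd2 H2]].
  exists (Rmin d1 d2). split; [apply Rmin_glb_lt; [apply cond_pos | exact Hd2]|].
  intros x' y' t' Hb' Hx Hy Ht.
  pose proof (Rmin_l d1 d2). pose proof (Rmin_r d1 d2).
  apply (Hd1 (X x' y' t', t')); [split; simpl | apply Htime, Hb'].
  - apply ball_R, H2; auto; lra.
  - apply ball_R. lra.
Qed.

End Box.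

(** * The kernel of [H_a] *)

Definition Ka_log (a del : R) : R := ln (1 + a ^ 2 / del ^ 2).

Definition Ka_primitive (a y : R) : R := - (1 / (2 * PI)) * Ka_log a y.

Lemma Ka_log_pos a del : 0 < a -> 0 < del -> 0 < Ka_log a del.
Proof.
  intros Ha Hd. unfold Ka_log. rewrite <- ln_1. apply ln_increasing; [lra|].
  assert (0 < a ^ 2 / del ^ 2) by (apply Rdiv_lt_0_compat; nra). lra.
Qed.

Lemma Ka_opp a y : Ka a (- y) = - Ka a y.
Proof.
  unfold Ka. replace ((- y) ^ 2) with (y ^ 2) by ring.
  replace (PI * - y * (y ^ 2 + a ^ 2)) with (- (PI * y * (y ^ 2 + a ^ 2))) by ring.
  unfold Rdiv. rewrite Rinv_opp. ring.
Qed.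

Lemma Ka_pos a y : 0 < a -> 0 < y -> 0 < Ka a y.
Proof.
  intros Ha Hy. unfold Ka. pose proof PI_RGT_0.
  apply Rdiv_lt_0_compat; [nra|]. apply Rmult_lt_0_compat; nra.
Qed.

Lemma Ka_mul_le a y : 0 < a -> 0 < y -> y * Ka a y <= / PI.
Proof.
  intros Ha Hy. unfold Ka. pose proof PI_RGT_0.
  replace (y * (a ^ 2 / (PI * y * (y ^ 2 + a ^ 2)))) with (/ PI * (a ^ 2 / (y ^ 2 + a ^ 2)))
    by (field; split; nra).
  rewrite <- (Rmult_1_r (/ PI)) at 2. apply Rmult_le_compat_l.
  - left; apply Rinv_0_lt_compat; lra.
  - apply Rcomplements.Rle_div_l; nra.
Qed.

Lemma is_derive_Ka_primitive a y : 0 < a -> 0 < y -> is_derive (Ka_primitive a) y (Ka a y).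
Proof.
  intros Ha Hy. unfold Ka_primitive, Ka_log, Ka. pose proof PI_RGT_0.
  auto_derive.
  - assert (0 <= a * (a * 1) * / (y * (y * 1))).
    { apply Rmult_le_pos; [nra|]. left; apply Rinv_0_lt_compat; nra. }
    repeat split; [nra | lra].
  - field. repeat split; nra.
Qed.

Lemma Ka_primitive_nonpos a y : 0 < a -> 0 < y -> Ka_primitive a y <= 0.
Proof.
  intros Ha Hy. unfold Ka_primitive. pose proof PI_RGT_0. pose proof (Ka_log_pos a y Ha Hy).
  assert (0 < 1 / (2 * PI)) by (apply Rdiv_lt_0_compat; lra). nra.
Qed.

Lemma Ka_continuous a y : 0 < a -> 0 < y -> continuous (Ka a) y.
Proof.
  intros Ha Hy. pose proof PI_RGT_0.
  apply (ex_derive_continuous (V := R_NormedModule)). unfold Ka. auto_derive.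
  apply Rgt_not_eq. apply Rmult_lt_0_compat; [apply Rmult_lt_0_compat|]; nra.
Qed.

Section OddIntegrand.

Variables (a M m x : R) (E : R -> R).
Hypotheses (Ha : 0 < a) (HE : forall z, Rabs (E z) <= m)
  (HL : forall z w, Rabs (E z - E w) <= M * Rabs (z - w)).

Let integrand (y : R) := (E (x - y) - E (x + y)) * Ka a y.

Lemma odd_integrand_le_near y : 0 < y -> Rabs (integrand y) <= 2 * M / PI.
Proof.
  intros Hy. unfold integrand. pose proof PI_RGT_0. pose proof (Ka_pos a y Ha Hy).
  rewrite Rabs_mult, (Rabs_pos_eq (Ka a y)) by lra.
  specialize (HL (x - y) (x + y)).
  replace (x - y - (x + y)) with (- (2 * y)) in HL by ring.
  rewrite Rabs_Ropp, (Rabs_pos_eq (2 * y)) in HL by lra.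
  pose proof (Ka_mul_le a y Ha Hy). pose proof (Rabs_pos (E (x - y) - E (x + y))).
  apply Rle_trans with (M * (2 * y) * Ka a y); [now apply Rmult_le_compat_r; lra|].
  replace (M * (2 * y) * Ka a y) with (2 * M * (y * Ka a y)) by ring.
  unfold Rdiv. apply Rmult_le_compat_l; [|lra].
  assert (0 <= M * (2 * y)) by lra. nra.
Qed.

Lemma odd_integrand_le_far y : 0 < y -> Rabs (integrand y) <= 2 * m * Ka a y.
Proof.
  intros Hy. unfold integrand. pose proof (Ka_pos a y Ha Hy).
  rewrite Rabs_mult, (Rabs_pos_eq (Ka a y)) by lra.
  apply Rmult_le_compat_r; [lra|].
  pose proof (HE (x - y)). pose proof (HE (x + y)).
  pose proof (Rabs_triang (E (x - y)) (- E (x + y))). rewrite Rabs_Ropp in *.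
  replace (E (x - y) - E (x + y)) with (E (x - y) + - E (x + y)) by ring. lra.
Qed.

(* Near the singularity the odd difference is [O(y)] and cancels it; far away
   [|Ka a|] integrates to the logarithm. *)
Lemma odd_integral_Ka_bound del eps b v :
  0 < eps -> eps <= del -> del <= b -> 0 <= M -> 0 <= m ->
  is_RInt integrand eps b v ->
  Rabs v <= 2 * M * del / PI + m / PI * Ka_log a del.
Proof.
  intros He Hed Hdb HM Hm Hv. pose proof PI_RGT_0.
  assert (Hex1 : ex_RInt integrand eps del)
    by (apply (ex_RInt_Chasles_1 (V := R_CompleteNormedModule) _ _ _ b); [lra | now exists v]).
  assert (Hex2 : ex_RInt integrand del b)
    by (apply (ex_RInt_Chasles_2 (V := R_CompleteNormedModule) _ eps); [lra | now exists v]).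
  assert (Hsplit : v = RInt integrand eps del + RInt integrand del b).
  { apply (is_RInt_unique (V := R_CompleteNormedModule)) in Hv. rewrite <- Hv.
    symmetry. apply (RInt_Chasles (V := R_CompleteNormedModule)); assumption. }
  assert (Hnear : Rabs (RInt integrand eps del) <= (del - eps) * (2 * M / PI)).
  { apply (norm_RInt_le integrand (fun _ => 2 * M / PI) eps del _ (scal (del - eps) (2 * M / PI)));
      [lra | | apply (RInt_correct (V := R_CompleteNormedModule)), Hex1
       | apply (is_RInt_const (V := R_NormedModule))].
    intros y Hy. apply odd_integrand_le_near. lra. }
  assert (Hprim : is_RInt (fun y => 2 * m * Ka a y) del b
                    (2 * m * Ka_primitive a b - 2 * m * Ka_primitive a del)).
  { apply (is_RInt_derive (fun y => 2 * m * Ka_primitive a y)); intros y Hy;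
      rewrite Rmin_left, Rmax_right in Hy by lra.
    - apply (is_derive_scal (Ka_primitive a)), is_derive_Ka_primitive; lra.
    - apply (continuous_scal_r (K := R_AbsRing) (V := R_NormedModule) (2 * m) (Ka a)).
      apply Ka_continuous; lra. }
  assert (Hfar : Rabs (RInt integrand del b)
                   <= 2 * m * Ka_primitive a b - 2 * m * Ka_primitive a del).
  { apply (norm_RInt_le integrand (fun y => 2 * m * Ka a y) del b);
      [lra | | apply (RInt_correct (V := R_CompleteNormedModule)), Hex2 | exact Hprim].
    intros y Hy. apply odd_integrand_le_far. lra. }
  pose proof (Ka_primitive_nonpos a b Ha ltac:(lra)).
  assert (Hdel : 2 * m * Ka_primitive a del = - (m / PI * Ka_log a del))
    by (unfold Ka_primitive; field; lra).
  assert (m * Ka_primitive a b <= 0) by nra.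
  assert ((del - eps) * (2 * M / PI) <= 2 * M * del / PI).
  { unfold Rdiv.
    assert (0 <= 2 * M * / PI) by (apply Rmult_le_pos; [lra | left; apply Rinv_0_lt_compat; lra]).
    nra. }
  rewrite Hsplit. pose proof (Rabs_triang (RInt integrand eps del) (RInt integrand del b)). lra.
Qed.

End OddIntegrand.

Lemma is_RInt_gen_m_infty_approx (f : R -> R) c l e :
  is_RInt_gen f (Rbar_locally m_infty) (at_point c) l -> 0 < e ->
  exists A, forall b, b < A -> exists v, is_RInt f b c v /\ Rabs (v - l) < e.
Proof.
  intros H He.
  destruct (H _ (locally_ball l (mkposreal e He))) as [Q R0 [A HA] HR HP].
  exists A. intros b Hb. destruct (HP b c (HA b Hb) HR) as [v [Hv1 Hv2]]. now exists v.
Qed.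

Lemma is_RInt_gen_p_infty_approx (f : R -> R) c l e :
  is_RInt_gen f (at_point c) (Rbar_locally p_infty) l -> 0 < e ->
  exists B, forall b, B < b -> exists v, is_RInt f c b v /\ Rabs (v - l) < e.
Proof.
  intros H He.
  destruct (H _ (locally_ball l (mkposreal e He))) as [Q R0 HQ [B HB] HP].
  exists B. intros b Hb. destruct (HP c b HQ (HB b Hb)) as [v [Hv1 Hv2]]. now exists v.
Qed.

Lemma filterlim_at_right_0_approx (f : R -> R) h e :
  filterlim f (at_right 0) (locally h) -> 0 < e ->
  exists d, 0 < d /\ forall x, 0 < x < d -> Rabs (f x - h) < e.
Proof.
  intros H He.
  destruct (H _ (locally_ball h (mkposreal e He))) as [d Hd].
  exists d. split; [apply cond_pos|]. intros x Hx. apply Hd; [|lra].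
  apply ball_R. rewrite Rminus_0_r, Rabs_pos_eq; lra.
Qed.

Lemma is_Ha_truncate a f x h e :
  is_Ha a f x h -> 0 < e -> exists d, 0 < d /\ forall eps, 0 < eps < d ->
    exists B, forall b, B < b -> exists v1 v2,
      is_RInt (fun y => f (x - y) * Ka a y) (- b) (- eps) v1 /\
      is_RInt (fun y => f (x - y) * Ka a y) eps b v2 /\ Rabs (v1 + v2 - h) < e.
Proof.
  intros [I1 [I2 [HI Hl]]] He.
  destruct (filterlim_at_right_0_approx _ _ (e / 3) Hl) as [d [Hd Hd']]; [lra|].
  exists d. split; [exact Hd|]. intros eps Heps.
  destruct (HI eps (proj1 Heps)) as [HI1 HI2].
  destruct (is_RInt_gen_m_infty_approx _ _ _ (e / 3) HI1) as [A HA]; [lra|].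
  destruct (is_RInt_gen_p_infty_approx _ _ _ (e / 3) HI2) as [B HB]; [lra|].
  exists (Rmax (- A) B). intros b Hb.
  pose proof (Rmax_l (- A) B). pose proof (Rmax_r (- A) B).
  destruct (HA (- b) ltac:(lra)) as [v1 [Hv1 E1]].
  destruct (HB b ltac:(lra)) as [v2 [Hv2 E2]].
  exists v1, v2. split; [exact Hv1 | split; [exact Hv2|]].
  specialize (Hd' eps Heps).
  apply Rabs_def2 in E1. apply Rabs_def2 in E2. apply Rabs_def2 in Hd'. apply Rabs_def1; lra.
Qed.

(* Since [Ka a] is odd, [H_a f (x) + H_a f (-x)] only sees the odd part of [f]. *)
Lemma Ha_add_opp_bound a (f : R -> R) x h1 h2 M m del :
  0 < a -> 0 < del -> 0 <= M -> 0 <= m ->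
  is_Ha a f x h1 -> is_Ha a f (- x) h2 ->
  (forall z, Rabs (f z - f (- z)) <= m) ->
  (forall z w, Rabs ((f z - f (- z)) - (f w - f (- w))) <= M * Rabs (z - w)) ->
  Rabs (h1 + h2) <= 2 * M * del / PI + m / PI * Ka_log a del.
Proof.
  intros Ha Hdel HM Hm H1 H2 HE HL.
  apply Rle_plus_epsilon. intros e He.
  destruct (is_Ha_truncate _ _ _ _ (e / 2) H1) as [d1 [Hd1 Htr1]]; [lra|].
  destruct (is_Ha_truncate _ _ _ _ (e / 2) H2) as [d2 [Hd2 Htr2]]; [lra|].
  set (eps := Rmin (Rmin d1 d2) del / 2).
  assert (Heps : 0 < eps /\ eps < d1 /\ eps < d2 /\ eps <= del).
  { unfold eps. pose proof (Rmin_l (Rmin d1 d2) del). pose proof (Rmin_r (Rmin d1 d2) del).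
    pose proof (Rmin_l d1 d2). pose proof (Rmin_r d1 d2).
    assert (0 < Rmin (Rmin d1 d2) del) by (repeat apply Rmin_glb_lt; lra). lra. }
  destruct Heps as (He0 & He1 & He2 & He3).
  destruct (Htr1 eps (conj He0 He1)) as [B1 HB1].
  destruct (Htr2 eps (conj He0 He2)) as [B2 HB2].
  set (b := 1 + Rmax del (Rmax B1 B2)).
  pose proof (Rmax_l del (Rmax B1 B2)). pose proof (Rmax_r del (Rmax B1 B2)).
  pose proof (Rmax_l B1 B2). pose proof (Rmax_r B1 B2).
  destruct (HB1 b ltac:(unfold b; lra)) as (v1 & v2 & Hv1 & Hv2 & Ev).
  destruct (HB2 b ltac:(unfold b; lra)) as (w1 & w2 & Hw1 & Hw2 & Ew).
  (* fold the four half-line integrals onto [eps, b] *)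
  pose proof (is_RInt_swap _ _ _ _ (is_RInt_comp_opp _ b eps v1 Hv1)) as P1.
  pose proof (is_RInt_swap _ _ _ _ (is_RInt_comp_opp _ b eps w1 Hw1)) as P2.
  pose proof (is_RInt_minus _ _ _ _ _ _
                (is_RInt_plus _ _ _ _ _ _ (is_RInt_minus _ _ _ _ _ _ Hv2 P1) Hw2) P2) as Hsum.
  assert (Hval : Rabs (v1 + v2 + w1 + w2) <= 2 * M * del / PI + m / PI * Ka_log a del).
  { apply (odd_integral_Ka_bound a M m x (fun z => f z - f (- z)) Ha HE HL del eps b);
      [lra | lra | unfold b; lra | lra | lra |].
    replace (v1 + v2 + w1 + w2) with (minus (plus (minus v2 (opp v1)) w2) (opp w1))
      by (unfold minus, plus, opp; simpl; ring).
    eapply is_RInt_ext; [|exact Hsum].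
    intros y _. unfold minus, plus, opp; simpl. rewrite !Ka_opp.
    replace (x - - y) with (x + y) by ring.
    replace (- x - - y) with (- (x - y)) by ring.
    replace (- x - y) with (- (x + y)) by ring.
    ring. }
  apply Rabs_le_between in Hval. apply Rabs_def2 in Ev. apply Rabs_def2 in Ew.
  apply Rabs_le. lra.
Qed.

(** * Barriers *)

(* The solution of [Phi' = B Phi + A + eps] with [Phi t0 = eps]. *)
Definition barrier (A B eps t0 s : R) : R :=
  (eps + (A + eps) / B) * exp (B * (s - t0)) - (A + eps) / B.

Section Barrier.

Variables A B eps t0 : R.
Hypotheses (HA : 0 <= A) (HB : 0 < B) (Heps : 0 < eps).

Lemma barrier_ge s : t0 <= s -> eps <= barrier A B eps t0 s.
Proof.
  intros Hs. unfold barrier. pose proof (exp_ineq1_le (B * (s - t0))).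
  assert (0 <= B * (s - t0)) by nra.
  assert (0 <= (A + eps) / B) by (apply Rdiv_le_0_compat; lra). nra.
Qed.

Lemma is_derive_barrier s :
  is_derive (barrier A B eps t0) s (B * barrier A B eps t0 s + A + eps).
Proof. unfold barrier. auto_derive; [exact I|]. unfold Rminus. field. lra. Qed.

Lemma barrier_continuous s : continuous (barrier A B eps t0) s.
Proof. apply (ex_derive_continuous (V := R_NormedModule)). eexists. apply is_derive_barrier. Qed.

End Barrier.

Lemma le_of_lt_barrier A B t0 s Y :
  0 <= A -> 0 < B -> t0 <= s ->
  (forall eps, 0 < eps -> Y < barrier A B eps t0 s) -> Y <= A / B * exp (B * (s - t0)).
Proof.
  intros HA HB Hs H. set (X := exp (B * (s - t0))).
  assert (HX : 0 < X) by apply exp_pos.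
  apply Rle_plus_epsilon. intros e He.
  assert (HXB : 0 < X + X / B) by (assert (0 < X / B) by (apply Rdiv_lt_0_compat; lra); lra).
  set (eps := e / (X + X / B)).
  assert (Heps : 0 < eps) by (apply Rdiv_lt_0_compat; lra).
  specialize (H eps Heps). unfold barrier in H. fold X in H.
  assert (E1 : (eps + (A + eps) / B) * X - (A + eps) / B
               = A / B * X + eps * (X + X / B) - (A + eps) / B) by (field; lra).
  assert (E2 : eps * (X + X / B) = e) by (unfold eps; field; split; [lra|]; nra).
  assert (0 <= (A + eps) / B) by (apply Rdiv_le_0_compat; lra).
  lra.
Qed.

Lemma del_exp_Ka_log_pow4 a del :
  0 < del -> (del * exp (Ka_log a del / 4)) ^ 4 = del ^ 4 + a ^ 2 * del ^ 2.
Proof.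
  intros Hdel.
  assert (H4 : exp (Ka_log a del / 4) ^ 4 = 1 + a ^ 2 / del ^ 2).
  { replace (exp (Ka_log a del / 4) ^ 4) with (exp (Ka_log a del)).
    - apply exp_ln. assert (0 <= a ^ 2 / del ^ 2) by (apply Rdiv_le_0_compat; nra). lra.
    - set (q := Ka_log a del / 4).
      replace (exp q ^ 4) with (exp q * exp q * exp q * exp q) by ring.
      rewrite <- !exp_plus. f_equal. unfold q. field. }
  rewrite Rpow_mult_distr, H4. field. lra.
Qed.

(* [del * (1 + a^2/del^2)^(1/4) = O(del^(1/2))] tends to zero. *)
Lemma le0_of_le_del_exp_Ka_log a K Y :
  0 < a -> 0 <= K ->
  (forall del, 0 < del -> del <= 1 -> del <= a -> Y <= K * (del * exp (Ka_log a del / 4))) ->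
  Y <= 0.
Proof.
  intros Ha HK H. apply Rnot_lt_le. intros HY.
  set (Q := K ^ 4 * (1 + a ^ 2)).
  assert (HQ : 0 <= Q) by (unfold Q; apply Rmult_le_pos; [apply pow_le; lra | nra]).
  assert (HY2 : 0 < Y ^ 2 / (Q + 1)) by (apply Rdiv_lt_0_compat; nra).
  set (del := Rmin (Rmin 1 a) (Y ^ 2 / (Q + 1))).
  pose proof (Rmin_l (Rmin 1 a) (Y ^ 2 / (Q + 1))).
  pose proof (Rmin_r (Rmin 1 a) (Y ^ 2 / (Q + 1))).
  pose proof (Rmin_l 1 a). pose proof (Rmin_r 1 a).
  assert (Hdel : 0 < del) by (unfold del; repeat apply Rmin_glb_lt; lra).
  assert (Hdel1 : del <= 1) by (unfold del; lra).
  assert (HdelY : del <= Y ^ 2 / (Q + 1)) by (unfold del; lra).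
  specialize (H del Hdel Hdel1 ltac:(unfold del; lra)).
  assert (HY4 : Y ^ 4 <= K ^ 4 * (del ^ 4 + a ^ 2 * del ^ 2)).
  { rewrite <- del_exp_Ka_log_pow4, <- Rpow_mult_distr by exact Hdel.
    apply pow_incr. lra. }
  assert (Hd4 : del ^ 4 <= del ^ 2) by (assert (del ^ 2 <= 1) by nra; nra).
  assert (HYQ : Y ^ 4 <= Q * del ^ 2).
  { assert (0 <= K ^ 4) by (apply pow_le; lra).
    apply (Rle_trans _ _ _ HY4). replace (Q * del ^ 2) with (K ^ 4 * (del ^ 2 + a ^ 2 * del ^ 2))
      by (unfold Q; ring).
    apply Rmult_le_compat_l; lra. }
  assert (Hdd : del ^ 2 <= (Y ^ 2 / (Q + 1)) ^ 2) by (apply pow_incr; lra).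
  assert (HZ : (Y ^ 2 / (Q + 1)) ^ 2 * (Q + 1) ^ 2 = Y ^ 4) by (field; lra).
  assert (Q * del ^ 2 <= Q * (Y ^ 2 / (Q + 1)) ^ 2) by (apply Rmult_le_compat_l; lra).
  assert (0 < Y ^ 4) by (apply pow_lt; lra).
  set (W := (Y ^ 2 / (Q + 1)) ^ 2) in *.
  assert (0 < W) by (unfold W; apply pow_lt; lra).
  nra.
Qed.

(** * Functions nondecreasing along rays *)

Definition ray_monotone (f : R -> R) : Prop :=
  forall u y, 0 <= u <= 1 -> 0 <= y <= PI -> f (y * u) <= f y.

Lemma ray_monotone_of_Derive_nonneg (f : R -> R) :
  (forall z, ex_derive f z) -> periodic f -> (forall x, f (- x) = f x) ->
  (forall x, 0 <= x < PI -> 0 <= Derive f x) -> ray_monotone f.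
Proof.
  intros Hf Hp He Hd u y Hu Hy.
  assert (HD : forall z, is_derive f z (Derive f z)) by (intros z; now apply Derive_correct).
  assert (HPI : Derive f PI = 0).
  { apply (is_derive_reflect_center f (2 * PI)).
    - intros z. replace (2 * PI - z) with (- z + 2 * PI) by ring. now rewrite Hp.
    - replace (2 * PI / 2) with PI by field. apply HD. }
  destruct (MVT_gen f (y * u) y (Derive f)) as [c [Hc Heq]].
  - intros; apply HD.
  - intros z _. apply continuity_pt_filterlim, (ex_derive_continuous (V := R_NormedModule)), Hf.
  - rewrite Rmin_left, Rmax_right in Hc by nra.
    assert (0 <= Derive f c).
    { destruct (Req_dec c PI) as [-> | E]; [lra | apply Hd; nra]. }
    assert (0 <= y - y * u) by nra. nra.
Qed.

Lemma ray_monotone_nonneg (f : R -> R) :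
  periodic f -> (forall x, f (- x) = f x) -> f 0 = 0 -> ray_monotone f ->
  forall x, 0 <= f x.
Proof.
  intros Hp He H0 Hm x.
  destruct (periodic_reduce f Hp x) as [x' [Hx' ->]].
  assert (Habs : f x' = f (Rabs x')).
  { destruct (Rle_dec 0 x') as [Hx0 | Hx0].
    - now rewrite Rabs_pos_eq.
    - rewrite Rabs_left by lra. now rewrite He. }
  rewrite Habs, <- H0, <- (Rmult_0_r (Rabs x')).
  apply Hm; [lra|]. split; [apply Rabs_pos | apply Rabs_le; lra].
Qed.

Lemma ray_monotone_derive_nonneg (f : R -> R) x l :
  ray_monotone f -> 0 <= x < PI -> is_derive f x l -> 0 <= l.
Proof.
  intros Hm Hx Hd. apply (is_derive_ge0_of_right f x l (PI - x) Hd); [lra|].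
  intros h Hh.
  assert (Hu : 0 <= x / (x + h) <= 1).
  { split; [apply Rdiv_le_0_compat; lra | apply Rcomplements.Rle_div_l; lra]. }
  pose proof (Hm (x / (x + h)) (x + h) Hu ltac:(lra)) as H.
  now replace ((x + h) * (x / (x + h))) with x in H by (field; lra).
Qed.

(** * The transport equation *)

Section Transport.

Variables (a g : R) (T : Rbar) (rho fx ft : R -> R -> R) (t1 : R).
Hypotheses (Ha : 0 < a) (Hg : 0 < g) (Ht1 : Rbar_lt t1 T) (Hcont : cont2 T rho).
Hypothesis Hfx :
  forall x s, 0 <= s -> Rbar_lt s T -> is_derive (fun y => rho y s) x (fx x s).
Hypothesis Hft :
  forall x s, 0 < s -> Rbar_lt s T -> is_derive (fun r => rho x r) s (ft x s).
Hypothesis Hper : forall s, 0 <= s -> Rbar_lt s T -> periodic (fun x => rho x s).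
Hypothesis Hpde : forall x s, 0 < s -> Rbar_lt s T ->
  exists h, is_Ha a (fun y => rho y s) x h /\ ft x s + g * h * fx x s = 0.

Lemma Rbar_lt_T s : s <= t1 -> Rbar_lt s T.
Proof. intros Hs. eapply Rbar_le_lt_trans; [|exact Ht1]. simpl. lra. Qed.

Lemma is_derive_rho_x x s : 0 <= s <= t1 -> is_derive (fun y => rho y s) x (fx x s).
Proof. intros Hs. apply Hfx; [lra | apply Rbar_lt_T; lra]. Qed.

Lemma is_derive_rho_t x s : 0 < s <= t1 -> is_derive (fun r => rho x r) s (ft x s).
Proof. intros Hs. apply Hft; [lra | apply Rbar_lt_T; lra]. Qed.

Lemma rho_periodic s : 0 <= s <= t1 -> periodic (fun x => rho x s).
Proof. intros Hs. apply Hper; [lra | apply Rbar_lt_T; lra]. Qed.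

Lemma ft_eq0_of_fx_eq0 x s : 0 < s <= t1 -> fx x s = 0 -> ft x s = 0.
Proof.
  intros Hs H0. destruct (Hpde x s ltac:(lra) ltac:(apply Rbar_lt_T; lra)) as [h [_ Eh]].
  rewrite H0 in Eh. lra.
Qed.

Lemma fx_periodic s : 0 <= s <= t1 -> periodic (fun x => fx x s).
Proof.
  intros Hs x. simpl.
  assert (Hshift : is_derive (fun y => rho y s) x (1 * fx (x + 2 * PI) s)).
  { apply (is_derive_ext (fun y => rho (1 * y + 2 * PI) s)).
    - intros y. rewrite Rmult_1_l. apply (rho_periodic s Hs).
    - apply (is_derive_comp_affine (fun y => rho y s)).
      rewrite Rmult_1_l. now apply is_derive_rho_x. }
  apply is_derive_unique in Hshift.
  rewrite (is_derive_unique _ _ _ (is_derive_rho_x x s Hs)) in Hshift. lra.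
Qed.

Lemma fx_bounded :
  cont2 T fx -> 0 <= t1 -> exists P, 1 <= P /\ forall x s, 0 <= s <= t1 -> Rabs (fx x s) <= P.
Proof.
  intros Hcx Ht10.
  destruct (box_continuous_bounded (- PI) PI 0 0 0 t1 (fun x _ s => fx x s)) as [P0 HP0].
  { apply (box_continuous_cont2 _ _ _ _ _ _ T fx (fun x _ _ => x));
      [exact Hcx | lra | exact Ht1 | apply box_continuous_x]. }
  exists (Rmax 1 P0). split; [apply Rmax_l|]. intros x s Hs.
  destruct (periodic_reduce _ (fx_periodic s Hs) x) as [x' [Hx' ->]].
  apply Rle_trans with P0; [|apply Rmax_r]. apply (HP0 x' 0 s). repeat split; lra.
Qed.

Section OddPart.

Variable P : R.
Hypotheses (HP1 : 1 <= P) (HP : forall x s, 0 <= s <= t1 -> Rabs (fx x s) <= P).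

Definition odd_part (x s : R) : R := rho x s - rho (- x) s.

(* [m = sup |odd_part|] obeys [m' <= odd_source del + odd_rate del * m] for every [del > 0]. *)
Definition odd_source (del : R) : R := 4 * g * P * P * del / PI.
Definition odd_rate (del : R) : R := g * P * Ka_log a del / PI.

Lemma odd_source_nonneg del : 0 <= del -> 0 <= odd_source del.
Proof.
  intros Hdel. pose proof PI_RGT_0. unfold odd_source.
  apply Rdiv_le_0_compat; [|lra]. repeat apply Rmult_le_pos; lra.
Qed.

Lemma odd_rate_pos del : 0 < del -> 0 < odd_rate del.
Proof.
  intros Hdel. pose proof PI_RGT_0. pose proof (Ka_log_pos a del Ha Hdel). unfold odd_rate.
  apply Rdiv_lt_0_compat; [|lra]. repeat apply Rmult_lt_0_compat; lra.
Qed.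

Lemma is_derive_odd_part_x x s :
  0 <= s <= t1 -> is_derive (fun y => odd_part y s) x (fx x s + fx (- x) s).
Proof.
  intros Hs. replace (fx x s + fx (- x) s) with (fx x s - - fx (- x) s) by ring.
  unfold odd_part. apply is_derive_Rminus; [now apply is_derive_rho_x|].
  apply (is_derive_comp_opp (fun y => rho y s)). now apply is_derive_rho_x.
Qed.

Lemma is_derive_odd_part_t x s :
  0 < s <= t1 -> is_derive (fun r => odd_part x r) s (ft x s - ft (- x) s).
Proof. intros Hs. unfold odd_part. apply is_derive_Rminus; now apply is_derive_rho_t. Qed.

Lemma odd_part_periodic s : 0 <= s <= t1 -> periodic (fun x => odd_part x s).
Proof.
  intros Hs x. unfold odd_part. pose proof (rho_periodic s Hs) as Hp.
  rewrite (Hp x). rewrite <- (Hp (- (x + 2 * PI))).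
  now replace (- (x + 2 * PI) + 2 * PI) with (- x) by ring.
Qed.

Lemma odd_part_lipschitz s : 0 <= s <= t1 ->
  forall z w, Rabs (odd_part z s - odd_part w s) <= 2 * P * Rabs (z - w).
Proof.
  intros Hs. apply (lipschitz_of_derive_bounded _ (fun y => fx y s + fx (- y) s)).
  - intros z. now apply is_derive_odd_part_x.
  - intros z. pose proof (HP z s Hs). pose proof (HP (- z) s Hs).
    pose proof (Rabs_triang (fx z s) (fx (- z) s)). lra.
Qed.

Lemma fx_opp_at_odd_part_max xs ts :
  0 <= ts <= t1 -> odd_part xs ts <> 0 ->
  (forall z, odd_part z ts * odd_part z ts <= odd_part xs ts * odd_part xs ts) ->
  fx (- xs) ts = - fx xs ts.
Proof.
  intros Hts Hnz Hmax.
  set (m := odd_part xs ts * odd_part xs ts).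
  assert (Hd : is_derive (fun x => m - odd_part x ts * odd_part x ts) xs
                 (0 - 2 * odd_part xs ts * (fx xs ts + fx (- xs) ts))).
  { apply (is_derive_Rminus (fun _ => m));
      [apply (is_derive_const (K := R_AbsRing) (V := R_NormedModule)) |].
    apply (is_derive_sqr (fun x => odd_part x ts)). now apply is_derive_odd_part_x. }
  apply (is_derive_local_min _ _ _ 1) in Hd; [| lra | intros h _; specialize (Hmax (xs + h)); lra].
  assert (Hz : odd_part xs ts * (fx xs ts + fx (- xs) ts) = 0) by lra.
  apply Rmult_integral in Hz. destruct Hz; [contradiction | lra].
Qed.

Lemma odd_part_time_derivative_bound xs ts m del :
  0 < ts <= t1 -> 0 < del -> 0 <= m ->
  fx (- xs) ts = - fx xs ts -> (forall z, Rabs (odd_part z ts) <= m) ->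
  Rabs (ft xs ts - ft (- xs) ts) <= odd_source del + odd_rate del * m.
Proof.
  intros Hts Hdel Hm Hfx_opp Hbound. pose proof PI_RGT_0.
  destruct (Hpde xs ts ltac:(lra) ltac:(apply Rbar_lt_T; lra)) as [h1 [Hh1 E1]].
  destruct (Hpde (- xs) ts ltac:(lra) ltac:(apply Rbar_lt_T; lra)) as [h2 [Hh2 E2]].
  pose proof (Ha_add_opp_bound a (fun y => rho y ts) xs h1 h2 (2 * P) m del Ha Hdel
                ltac:(lra) Hm Hh1 Hh2 Hbound (odd_part_lipschitz ts ltac:(lra))) as Hh.
  replace (ft xs ts - ft (- xs) ts) with (- g * fx xs ts * (h1 + h2))
    by (rewrite Hfx_opp in E2; nra).
  rewrite !Rabs_mult, Rabs_Ropp, (Rabs_pos_eq g) by lra.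
  apply Rle_trans with (g * P * (2 * (2 * P) * del / PI + m / PI * Ka_log a del)).
  - apply Rmult_le_compat;
      [apply Rmult_le_pos; [lra | apply Rabs_pos] | apply Rabs_pos | | exact Hh].
    apply Rmult_le_compat_l; [lra | apply HP; lra].
  - right. unfold odd_source, odd_rate. field. lra.
Qed.

Section Comparison.

Variables t0 s1 del eps : R.
Hypotheses (Ht0 : 0 <= t0) (Ht0s1 : t0 <= s1) (Hs1 : s1 <= t1)
  (Hstart : forall x, odd_part x t0 = 0) (Hdel : 0 < del) (Heps : 0 < eps).

Let Phi := barrier (odd_source del) (odd_rate del) eps t0.

Let Phi_ge s : t0 <= s -> eps <= Phi s.
Proof. apply barrier_ge; [apply odd_source_nonneg; lra | now apply odd_rate_pos | exact Heps]. Qed.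

Lemma odd_gap_continuous : box_continuous (- PI) PI 0 0 t0 s1
  (fun x _ s => Phi s * Phi s - odd_part x s * odd_part x s).
Proof.
  assert (HPhi : box_continuous (- PI) PI 0 0 t0 s1 (fun _ _ s => Phi s)).
  { apply (box_continuous_comp _ _ _ _ _ _ Phi (fun _ _ s => s)); [|apply box_continuous_t].
    intros z. now apply barrier_continuous, odd_rate_pos. }
  assert (Hodd : box_continuous (- PI) PI 0 0 t0 s1 (fun x _ s => odd_part x s)).
  { apply box_continuous_minus.
    - apply (box_continuous_cont2 _ _ _ _ _ _ T rho (fun x _ _ => x));
        [exact Hcont | exact Ht0 | apply Rbar_lt_T; lra | apply box_continuous_x].
    - apply (box_continuous_cont2 _ _ _ _ _ _ T rho (fun x _ _ => - x));
        [exact Hcont | exact Ht0 | apply Rbar_lt_T; lra |].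
      apply (box_continuous_comp _ _ _ _ _ _ Ropp (fun x _ _ => x)); [|apply box_continuous_x].
      intros z. exact (continuous_opp (V := R_NormedModule) (fun y : R => y) z (continuous_id z)). }
  apply box_continuous_minus; now apply box_continuous_mult.
Qed.

(* At a first touching time [d_t (Phi^2 - odd_part^2) <= 0], whereas the Hilbert
   bound on [d_t odd_part] leaves a margin [2 eps Phi > 0]. *)
Lemma odd_part_touch_absurd xs ts :
  t0 < ts <= s1 ->
  (forall z, odd_part z ts * odd_part z ts <= Phi ts * Phi ts) ->
  odd_part xs ts * odd_part xs ts = Phi ts * Phi ts ->
  (forall t, t0 <= t < ts -> odd_part xs t * odd_part xs t < Phi t * Phi t) -> False.
Proof.
  intros Hts Hle Heq Hbefore.
  pose proof (Phi_ge ts ltac:(lra)) as HPhi.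
  set (E := odd_part xs ts) in *.
  assert (HE0 : E <> 0) by (intros HE; rewrite HE in Heq; nra).
  assert (Hfx_opp : fx (- xs) ts = - fx xs ts)
    by (apply fx_opp_at_odd_part_max; [lra | exact HE0 | fold E; rewrite Heq; exact Hle]).
  assert (Hbound : forall z, Rabs (odd_part z ts) <= Phi ts).
  { intros z. rewrite <- (Rabs_pos_eq (Phi ts)) by lra. apply Rsqr_le_abs_0, Hle. }
  pose proof (odd_part_time_derivative_bound xs ts (Phi ts) del ltac:(lra) Hdel ltac:(lra)
                Hfx_opp Hbound) as HEt.
  set (Et := ft xs ts - ft (- xs) ts) in *.
  assert (Hdt : is_derive (fun s => Phi s * Phi s - odd_part xs s * odd_part xs s) ts
      (2 * Phi ts * (odd_rate del * Phi ts + odd_source del + eps) - 2 * E * Et)).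
  { apply is_derive_Rminus; apply is_derive_sqr;
      [now apply is_derive_barrier, odd_rate_pos | apply is_derive_odd_part_t; lra]. }
  apply (is_derive_le0_of_left _ _ _ (ts - t0)) in Hdt;
    [| lra | intros h Hh; cbv beta; fold E; specialize (Hbefore (ts - h) ltac:(lra)); lra].
  assert (Hprod : E * Et <= Phi ts * (odd_source del + odd_rate del * Phi ts)).
  { apply Rle_trans with (Rabs (E * Et)); [apply Rle_abs|].
    rewrite Rabs_mult.
    apply Rmult_le_compat; [apply Rabs_pos | apply Rabs_pos | apply Hbound | exact HEt]. }
  nra.
Qed.

Lemma odd_part_lt_barrier x : Rabs (odd_part x s1) < Phi s1.
Proof.
  pose proof PI_RGT_0.
  destruct (box_first_touch _ _ _ _ _ _ _ odd_gap_continuous)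
    as [Hall | (xs & ys & ts & (Hxs & _ & Hts) & Htouch & HF0 & Hat & Hbefore)].
  - intros x0 y0 _. rewrite Hstart. pose proof (Phi_ge t0 (Rle_refl _)). nra.
  - destruct (periodic_reduce _ (odd_part_periodic s1 ltac:(lra)) x) as [x' [Hx' ->]].
    specialize (Hall x' 0 s1 ltac:(repeat split; lra)). pose proof (Phi_ge s1 Ht0s1).
    rewrite <- (Rabs_pos_eq (Phi s1)) by lra. apply Rsqr_lt_abs_0. unfold Rsqr. lra.
  - exfalso. apply (odd_part_touch_absurd xs ts); [lra | | lra |].
    + intros z. destruct (periodic_reduce _ (odd_part_periodic ts ltac:(lra)) z) as [z' [Hz' ->]].
      specialize (Hat z' 0 ltac:(repeat split; lra)). lra.
    + intros t Ht. specialize (Hbefore t Ht). lra.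
Qed.

End Comparison.

(* Letting [eps -> 0] gives [|odd_part| <= (4 P / L) del exp (B (s1 - t0))]
   with [L = Ka_log a del]; over a step of length [PI / (4 g P)] the growth
   factor is at most [exp (L / 4) ~ (a / del) ^ (1 / 2)], so the bound still
   tends to [0] with [del]. *)
Lemma odd_part_step t0 s1 :
  0 <= t0 <= s1 -> s1 <= t1 -> s1 - t0 <= PI / (4 * g * P) ->
  (forall x, odd_part x t0 = 0) -> forall x, odd_part x s1 = 0.
Proof.
  intros Ht0 Hs1 Hstep Hstart x. pose proof PI_RGT_0.
  assert (Hln2 : 0 < ln 2) by (rewrite <- ln_1; apply ln_increasing; lra).
  apply Rabs_eq_0, Rle_antisym; [|apply Rabs_pos].
  apply (le0_of_le_del_exp_Ka_log a (4 * P / ln 2)); [exact Ha | apply Rdiv_le_0_compat; lra|].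
  intros del Hdel _ Hda.
  pose proof (Ka_log_pos a del Ha Hdel) as HL.
  assert (HL2 : ln 2 <= Ka_log a del).
  { unfold Ka_log. apply ln_le; [lra|].
    assert (1 <= a ^ 2 / del ^ 2) by (apply Rcomplements.Rle_div_r; nra). lra. }
  pose proof (odd_rate_pos del Hdel) as HB.
  pose proof (le_of_lt_barrier _ _ t0 s1 (Rabs (odd_part x s1)) (odd_source_nonneg del ltac:(lra))
                HB ltac:(lra) (fun eps Heps => odd_part_lt_barrier t0 s1 del eps
                   ltac:(lra) ltac:(lra) ltac:(lra) Hstart Hdel Heps x)) as Hlim.
  assert (Hratio : odd_source del / odd_rate del = 4 * P / Ka_log a del * del).
  { unfold odd_source, odd_rate. field. repeat split; lra. }
  assert (Hgrowth : exp (odd_rate del * (s1 - t0)) <= exp (Ka_log a del / 4)).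
  { apply exp_le. apply Rle_trans with (odd_rate del * (PI / (4 * g * P))).
    - apply Rmult_le_compat_l; lra.
    - right. unfold odd_rate. field. lra. }
  rewrite Hratio in Hlim. apply (Rle_trans _ _ _ Hlim).
  rewrite <- Rmult_assoc. apply Rmult_le_compat; [| apply Rlt_le, exp_pos | | exact Hgrowth].
  - apply Rmult_le_pos; [apply Rdiv_le_0_compat|]; lra.
  - apply Rmult_le_compat_r; [lra|]. unfold Rdiv. apply Rmult_le_compat_l; [lra|].
    apply Rinv_le_contravar; lra.
Qed.

Lemma odd_part_vanishes :
  (forall x, odd_part x 0 = 0) -> forall x s, 0 <= s <= t1 -> odd_part x s = 0.
Proof.
  intros H0. pose proof PI_RGT_0.
  set (tau := PI / (4 * g * P)).
  assert (Htau : 0 < tau) by (unfold tau; apply Rdiv_lt_0_compat; nra).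
  assert (Hsteps : forall n : nat, forall s, 0 <= s <= t1 -> s <= INR n * tau ->
            forall x, odd_part x s = 0).
  { induction n as [|n IH]; intros s Hs Hsn.
    - simpl in Hsn. replace s with 0 by lra. exact H0.
    - destruct (Rle_dec s (INR n * tau)) as [Hl | Hl]; [now apply IH|].
      assert (0 <= INR n * tau) by (apply Rmult_le_pos; [apply pos_INR | lra]).
      rewrite S_INR in Hsn.
      apply (odd_part_step (INR n * tau)); [lra | lra | unfold tau in *; lra |].
      apply IH; lra. }
  intros x s Hs. destruct (INR_unbounded (t1 / tau)) as [n Hn].
  apply (Hsteps n s Hs).
  assert (t1 / tau * tau = t1) by (field; lra). nra.
Qed.

End OddPart.

Section EvenSolution.

Hypothesis Heven : forall x s, 0 <= s <= t1 -> rho (- x) s = rho x s.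

Lemma fx_origin s : 0 <= s <= t1 -> fx 0 s = 0.
Proof.
  intros Hs. apply (is_derive_reflect_center (fun y => rho y s) 0).
  - intros y. rewrite Rminus_0_l. now apply Heven.
  - replace (0 / 2) with 0 by field. now apply is_derive_rho_x.
Qed.

Lemma fx_PI s : 0 <= s <= t1 -> fx PI s = 0.
Proof.
  intros Hs. apply (is_derive_reflect_center (fun y => rho y s) (2 * PI)).
  - intros y. replace (2 * PI - y) with (- y + 2 * PI) by ring.
    rewrite (rho_periodic s Hs (- y)). now apply Heven.
  - replace (2 * PI / 2) with PI by field. now apply is_derive_rho_x.
Qed.

Lemma rho_origin_const s : 0 <= s <= t1 -> rho 0 s = rho 0 0.
Proof.
  intros Hs. destruct (Rle_lt_or_eq_dec 0 s (proj1 Hs)) as [Hs0 | <-]; [|reflexivity].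
  apply (const_of_is_derive_zero_right (fun r => rho 0 r) s); [lra| |].
  - intros r Hr. pose proof (is_derive_rho_t 0 r ltac:(lra)) as Hd.
    now rewrite (ft_eq0_of_fx_eq0 0 r ltac:(lra) (fx_origin r ltac:(lra))) in Hd.
  - intros e He.
    destruct (box_continuous_cont2 0 0 0 0 0 t1 T rho (fun _ _ _ => 0) Hcont (Rle_refl 0) Ht1
                (box_continuous_const _ _ _ _ _ _ 0) 0 0 0 ltac:(repeat split; lra) e He)
      as [d [Hd Hnear]].
    exists (Rmin d t1). split; [apply Rmin_glb_lt; lra|].
    intros r Hr. pose proof (Rmin_l d t1). pose proof (Rmin_r d t1).
    apply (Hnear 0 0 r); [repeat split; lra | | | rewrite Rminus_0_r, Rabs_pos_eq; lra];
      rewrite Rminus_diag, Rabs_R0; lra.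
Qed.

(* [eps * (1 + s)] makes the gap strictly increasing in time wherever the
   transport equation freezes [rho], which is what a first touch would force. *)
Definition ray_gap (eps u y s : R) : R := rho y s - rho (y * u) s + eps * (1 + s).

Lemma ray_gap_continuous eps : box_continuous 0 1 0 PI 0 t1 (ray_gap eps).
Proof.
  apply box_continuous_plus; [apply box_continuous_minus|].
  - apply (box_continuous_cont2 _ _ _ _ _ _ T rho (fun _ y _ => y));
      [exact Hcont | lra | exact Ht1 | apply box_continuous_y].
  - apply (box_continuous_cont2 _ _ _ _ _ _ T rho (fun u y _ => y * u));
      [exact Hcont | lra | exact Ht1 |].
    apply box_continuous_mult; [apply box_continuous_y | apply box_continuous_x].
  - apply box_continuous_mult; [apply box_continuous_const|].
    apply box_continuous_plus; [apply box_continuous_const | apply box_continuous_t].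
Qed.

Section RayTouch.

Variables eps us ys ts : R.
Hypotheses (Heps : 0 < eps) (Hbox : in_box 0 1 0 PI 0 t1 us ys ts) (Hts0 : 0 < ts)
  (Hzero : ray_gap eps us ys ts = 0)
  (Hat : forall u y, in_box 0 1 0 PI 0 t1 u y ts -> 0 <= ray_gap eps u y ts).

Lemma ray_touch_interior : 0 < ys /\ us < 1.
Proof.
  unfold ray_gap in Hzero. destruct Hbox as (Hus & Hys & Hts).
  assert (Hneg : rho ys ts - rho (ys * us) ts < 0).
  { assert (0 < eps * (1 + ts)) by (apply Rmult_lt_0_compat; lra). lra. }
  split.
  - destruct (Req_dec ys 0) as [E | E]; [|lra]. rewrite E, Rmult_0_l in Hneg. lra.
  - destruct (Req_dec us 1) as [E | E]; [|lra]. rewrite E, Rmult_1_r in Hneg. lra.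
Qed.

Lemma ray_touch_fx_inner : fx (ys * us) ts = 0.
Proof.
  destruct Hbox as (Hus & Hys & Hts). destruct ray_touch_interior as [Hys0 Hus1].
  destruct (Req_dec us 0) as [-> | Hus0]; [rewrite Rmult_0_r; apply fx_origin; lra|].
  assert (Hd : is_derive (fun u => ray_gap eps u ys ts) us (- (ys * fx (ys * us) ts))).
  { apply (is_derive_ext_R (fun u => (rho ys ts + eps * (1 + ts)) - rho (ys * u) ts)).
    { intros u. cbv beta. unfold ray_gap. ring. }
    rewrite <- Rminus_0_l. apply (is_derive_Rminus (fun _ => _)).
    - apply (is_derive_const (K := R_AbsRing) (V := R_NormedModule)).
    - apply (is_derive_comp_scal (fun z => rho z ts)), is_derive_rho_x; lra. }
  apply (is_derive_local_min _ _ _ (Rmin us (1 - us))) in Hd.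
  - assert (Hz : ys * fx (ys * us) ts = 0) by lra.
    apply Rmult_integral in Hz. destruct Hz; lra.
  - apply Rmin_glb_lt; lra.
  - intros h Hh. pose proof (Rmin_l us (1 - us)). pose proof (Rmin_r us (1 - us)).
    apply Rabs_def2 in Hh. rewrite Hzero. apply Hat. repeat split; lra.
Qed.

Lemma ray_touch_fx_outer : fx ys ts = 0.
Proof.
  destruct Hbox as (Hus & Hys & Hts). destruct ray_touch_interior as [Hys0 Hus1].
  destruct (Req_dec ys PI) as [-> | HyPI]; [apply fx_PI; lra|].
  assert (Hd : is_derive (fun y => ray_gap eps us y ts) ys (fx ys ts - us * fx (ys * us) ts)).
  { apply (is_derive_ext_R (fun y => (rho y ts - rho (us * y) ts) + eps * (1 + ts))).
    { intros y. cbv beta. unfold ray_gap. now rewrite (Rmult_comm us y). }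
    rewrite <- (Rplus_0_r (fx ys ts - us * fx (ys * us) ts)).
    apply (is_derive_plus (K := R_AbsRing) (V := R_NormedModule));
      [| apply (is_derive_const (K := R_AbsRing) (V := R_NormedModule))].
    apply is_derive_Rminus; [apply is_derive_rho_x; lra|].
    rewrite (Rmult_comm ys us).
    apply (is_derive_comp_scal (fun z => rho z ts)), is_derive_rho_x; lra. }
  apply (is_derive_local_min _ _ _ (Rmin ys (PI - ys))) in Hd.
  - rewrite ray_touch_fx_inner in Hd. lra.
  - apply Rmin_glb_lt; lra.
  - intros h Hh. pose proof (Rmin_l ys (PI - ys)). pose proof (Rmin_r ys (PI - ys)).
    apply Rabs_def2 in Hh. rewrite Hzero. apply Hat. repeat split; lra.
Qed.

Lemma ray_touch_absurd : (forall t, 0 <= t < ts -> 0 < ray_gap eps us ys t) -> False.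
Proof.
  intros Hbefore. destruct Hbox as (_ & _ & Hts).
  assert (Hd : is_derive (fun s => ray_gap eps us ys s) ts
                 (ft ys ts - ft (ys * us) ts + eps * 1)).
  { apply (is_derive_plus (K := R_AbsRing) (V := R_NormedModule)).
    - apply is_derive_Rminus; apply is_derive_rho_t; lra.
    - auto_derive; auto. }
  rewrite (ft_eq0_of_fx_eq0 ys ts ltac:(lra) ray_touch_fx_outer),
    (ft_eq0_of_fx_eq0 (ys * us) ts ltac:(lra) ray_touch_fx_inner) in Hd.
  apply (is_derive_le0_of_left _ _ _ ts) in Hd; [lra | lra |].
  intros h Hh. rewrite Hzero. apply Rlt_le, Hbefore. lra.
Qed.

End RayTouch.

Lemma rho_ray_monotone :
  ray_monotone (fun y => rho y 0) -> forall s, 0 <= s <= t1 -> ray_monotone (fun y => rho y s).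
Proof.
  intros H0 s Hs u y Hu Hy. apply Rle_plus_epsilon. intros e He.
  set (eps := e / (1 + t1)).
  assert (Heps : 0 < eps) by (apply Rdiv_lt_0_compat; lra).
  destruct (box_first_touch _ _ _ _ _ _ _ (ray_gap_continuous eps))
    as [Hall | (us & ys & ts & Hbox & Hts & Hzero & Hat & Hbefore)].
  - intros u0 y0 (Hu0 & Hy0 & _). unfold ray_gap. specialize (H0 u0 y0 Hu0 Hy0). lra.
  - specialize (Hall u y s ltac:(repeat split; lra)). unfold ray_gap in Hall.
    assert (eps * (1 + t1) = e) by (unfold eps; field; lra).
    assert (eps * (1 + s) <= eps * (1 + t1)) by (apply Rmult_le_compat_l; lra). lra.
  - exfalso. apply (ray_touch_absurd eps us ys ts); auto.
Qed.

End EvenSolution.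

End Transport.

Lemma transport_eq_partials a g T (rho fx ft : R -> R -> R) :
  (forall x s, 0 <= s -> Rbar_lt s T -> is_derive (fun y => rho y s) x (fx x s)) ->
  (forall x s, 0 < s -> Rbar_lt s T -> is_derive (fun r => rho x r) s (ft x s)) ->
  (forall x s, 0 < s -> Rbar_lt s T -> exists h, is_Ha a (fun y => rho y s) x h /\
     Derive (fun r => rho x r) s + g * h * Derive (fun y => rho y s) x = 0) ->
  forall x s, 0 < s -> Rbar_lt s T ->
    exists h, is_Ha a (fun y => rho y s) x h /\ ft x s + g * h * fx x s = 0.
Proof.
  intros Hfx Hft Hpde x s Hs HsT. destruct (Hpde x s Hs HsT) as [h [Hh E]].
  exists h. split; [exact Hh|].
  replace (Derive (fun r => rho x r) s) with (ft x s) in E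
    by (symmetry; now apply is_derive_unique, Hft).
  replace (Derive (fun y => rho y s) x) with (fx x s) in E
    by (symmetry; apply is_derive_unique, Hfx; [lra | exact HsT]).
  exact E.
Qed.

Theorem lemma4p2 (a g : R) (T : Rbar) (rho0 : R -> R) (rho : R -> R -> R) :
  0 < a -> 0 < g ->
  smooth1 rho0 -> periodic rho0 ->
  (forall x, rho0 (- x) = rho0 x) ->
  (forall x, 0 <= rho0 x) ->
  rho0 0 = 0 ->
  (forall x, 0 <= x < PI -> 0 <= Derive rho0 x) ->
  smooth2 T rho ->
  (forall t, 0 <= t -> Rbar_lt t T -> periodic (fun x => rho x t)) ->
  (forall x t, 0 < t -> Rbar_lt t T ->
     exists h, is_Ha a (fun y => rho y t) x h /\
       Derive (fun s => rho x s) t + g * h * Derive (fun y => rho y t) x = 0) ->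
  (forall x, rho x 0 = rho0 x) ->
  forall t, 0 <= t -> Rbar_lt t T ->
    (forall x, rho (- x) t = rho x t) /\
    (forall x, 0 <= rho x t) /\
    rho 0 t = 0 /\
    (forall x, 0 <= x < PI -> 0 <= Derive (fun y => rho y t) x).
Proof.
  (* nonnegativity of [rho0] follows from the other hypotheses on [rho0] *)
  intros Ha Hg Hs0 Hp0 He0 _ Hz0 Hd0 Hsm Hper Hpde Hinit t Ht HtT.
  destruct (Hsm 1%nat) as [Hc [fx [ft [Hfx [Hft [Hcx _]]]]]].
  pose proof (transport_eq_partials a g T rho fx ft Hfx Hft Hpde) as Hpde'.
  destruct (fx_bounded T rho fx t HtT Hfx Hper Hcx Ht) as [P [HP1 HP]].
  assert (Heven : forall x s, 0 <= s <= t -> rho (- x) s = rho x s).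
  { intros x s Hs. enough (odd_part rho x s = 0) by (unfold odd_part in *; lra).
    apply (odd_part_vanishes a g T rho fx ft t Ha Hg HtT Hc Hfx Hft Hper Hpde' P HP1 HP);
      [|exact Hs].
    intros y. unfold odd_part. rewrite !Hinit, He0. ring. }
  assert (Hmono : ray_monotone (fun y => rho y t)).
  { apply (rho_ray_monotone a g T rho fx ft t HtT Hc Hfx Hft Hper Hpde' Heven); [|lra].
    intros u y. rewrite !Hinit. revert u y.
    apply ray_monotone_of_Derive_nonneg; auto. intros z. apply (Hs0 0%nat). }
  assert (Hzero : rho 0 t = 0).
  { rewrite (rho_origin_const a g T rho fx ft t HtT Hc Hfx Hft Hpde' Heven t), Hinit by lra.
    exact Hz0. }
  split; [|split; [|split; [exact Hzero|]]].
  - intros x. apply Heven. lra.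
  - apply ray_monotone_nonneg; auto. intros x. apply Heven. lra.
  - intros x Hx. apply (ray_monotone_derive_nonneg _ x _ Hmono Hx).
    apply Derive_correct. exists (fx x t). now apply Hfx.
Qed.
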